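(* Let $K$ be an idempotent ordered TGP-$\omega$-valuation monoid, $AP$ a finite set of atomic propositions, $k\in K\setminus\{\mathbf{0},\mathbf{1}\}$ and $\varphi\in k\text{-}\vee\text{-}t\text{-}RULTL(K,AP)$. Then $\|\varphi\|:(\mathcal{P}(AP))^{\omega}\to K$ is $k$-safe.
   Context: Idempotent ordered TGP-$\omega$-valuation monoid $(K,+,\cdot,Val^{\omega},\mathbf{0},\mathbf{1})$: complete monoid $(K,+,\mathbf{0})$ (infinitary sums over arbitrary index sets with the usual axioms), idempotent, totally ordered by the natural order $k\le k'$ iff $k'=k'+k$; $Val^{\omega}$ maps finitely-valued sequences in $K$ to $K$; $\cdot$ has zero $\mathbf{0}$ and unit $\mathbf{1}$; $Val^{\omega}=\mathbf{0}$ if some entry is $\mathbf{0}$; $Val^{\omega}(\mathbf{1}^{\omega})=\mathbf{1}$; $\sum_I(k\cdot\mathbf{1})=k\cdot\sum_I\mathbf{1}$; $Val^{\omega}$ distributes over finite sums of families each entirely in $L\setminus\{\mathbf{0},\mathbf{1}\}$ or entirely in $\{\mathbf{0},\mathbf{1}\}$ ($L\subseteq K$ finite); $Val^{\omega}(\mathbf{1},k_1,\dots)=Val^{\omega}(k_1,\dots)$, $Val^{\omega}(k,\mathbf{1},\dots)=k$, $k\le\mathbf{1}$, $k_i\ge k\ \forall i\Rightarrow Val^{\omega}((k_i)_i)\ge k$. Weighted LTL over $AP$ and $K$: $\varphi::=k\mid a\mid\neg a\mid\varphi\vee\varphi\mid\varphi\wedge\varphi\mid\bigcirc\varphi\mid\varphi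 U\varphi\mid\square\varphi$, semantics: $(\|k\|,w)=k$; $(\|a\|,w)=\mathbf{1}$ if $a\in w(0)$ else $\mathbf{0}$; $\neg a$ dually; $\vee\mapsto+$, $\wedge\mapsto\cdot$; $(\|\bigcirc\varphi\|,w)=(\|\varphi\|,w_{\ge1})$; $(\|\varphi U\psi\|,w)=\sum_{i\ge0}Val^{\omega}((\|\varphi\|,w_{\ge0}),\dots,(\|\varphi\|,w_{\ge i-1}),(\|\psi\|,w_{\ge i}),\mathbf{1},\mathbf{1},\dots)$; $(\|\square\varphi\|,w)=Val^{\omega}(((\|\varphi\|,w_{\ge i}))_{i\ge0})$. $true:=\mathbf{1}$, $\varphi\tilde U\psi:=\square\varphi\vee(\varphi U\psi)$. $sbLTL(K,AP)$: $\varphi::=true\mid a\mid\neg a\mid\varphi\vee\varphi\mid\varphi\wedge\varphi\mid\bigcirc\varphi\mid\varphi\tilde U\varphi\mid\square\varphi$. $L_k=\{k'\in K\mid k'\ge k\}$. $k\text{-}stLTL(K,AP)$: formulas $\bigvee_{1\le i\le n}(k_i\wedge\varphi_i)$, $k_i\in L_k\setminus\{\mathbf{0},\mathbf{1}\}$, $\varphi_i\in sbLTL(K,AP)$. $k\text{-}\vee\text{-}t\text{-}RULTL(K,AP)$ is the least class of formulas such that: (1) every $k'\in L_k$ is in it; (2) $sbLTL(K,AP)\subseteq$ it; (3) $k\text{-}stLTL(K,AP)\subseteq$ it; (4) closed under $\bigcirc$; (5) if $\varphi,\psi\in k\text{-}stLTL(K,AP)$ then $\varphi\vee\psi$ is in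 it; (6) if $\varphi\in sbLTL(K,AP)$ and $\psi\in k\text{-}stLTL(K,AP)$, or $\psi=\xi\tilde U\lambda$, or $\psi=\square\xi$ with $\xi,\lambda\in k\text{-}stLTL(K,AP)$, then $\varphi\wedge\psi,\psi\wedge\varphi$ are in it; (7) if $\varphi,\psi\in k\text{-}stLTL(K,AP)$ then $\varphi\tilde U\psi$ is in it; (8) if $\varphi\in k\text{-}stLTL(K,AP)$ then $\square\varphi$ is in it. A series $s$ is $k$-safe if for every $w$: whenever for every $i>0$ there is $u$ with $(s,w_{<i}u)\ge k$ ($w_{<i}$ the length-$i$ prefix), then $(s,w)\ge k$. *)

From Stdlib Require Import List Arith PeanoNat.

Definition fin_valued {K : Type} (s : nat -> K) : Prop :=
  exists l : list K, forall i, In (s i) l.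

(** Idempotent ordered TGP-omega-valuation monoid.
    [csum I f] is the infinitary sum over an arbitrary index type [I].
    [Val] is total on [nat -> K]; its axioms are only imposed on
    finitely-valued sequences (the domain of Val^omega in the paper). *)
Record TGPMonoid := {
  car :> Type;
  add : car -> car -> car;
  zero : car;
  one : car;
  mul : car -> car -> car;
  csum : forall I : Type, (I -> car) -> car;
  Val : (nat -> car) -> car;
  add_assoc : forall x y z, add x (add y z) = add (add x y) z;
  add_comm : forall x y, add x y = add y x;
  add_0l : forall x, add zero x = x;
  csum_empty : forall (I : Type) (f : I -> car), (I -> False) -> csum I f = zero;
  csum_single : forall (I : Type) (f : I -> car) (i0 : I),
      (forall i, i = i0) -> csum I f = f i0;
  csum_pair : forall f : bool -> car, csum bool f = add (f true) (f false);
  csum_partition : forall (J : Type) (I : J -> Type) (f : {j : J & I j} -> car),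
      csum {j : J & I j} f = csum J (fun j => csum (I j) (fun i => f (existT _ j i)));
  csum_bij : forall (I I' : Type) (e : I -> I') (e' : I' -> I),
      (forall x, e' (e x) = x) -> (forall y, e (e' y) = y) ->
      forall f : I' -> car, csum I (fun i => f (e i)) = csum I' f;
  add_idem : forall x, add x x = x;
  (* natural order (x <= y iff y = y + x) is total *)
  nat_order_total : forall x y, y = add y x \/ x = add x y;
  mul_0l : forall x, mul zero x = zero;
  mul_0r : forall x, mul x zero = zero;
  mul_1l : forall x, mul one x = x;
  mul_1r : forall x, mul x one = x;
  Val_zero : forall s : nat -> car, fin_valued s -> (exists i, s i = zero) -> Val s = zero;
  Val_ones : Val (fun _ => one) = one;
  csum_mul_one : forall (I : Type) (k : car),
      csum I (fun _ => mul k one) = mul k (csum I (fun _ => one));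
  Val_distr : forall (L : list car) (n : nat -> nat)
      (f : forall j : nat, {i : nat | i < n j} -> car),
      (forall j, (forall i, In (f j i) L /\ f j i <> zero /\ f j i <> one)
              \/ (forall i, f j i = zero \/ f j i = one)) ->
      Val (fun j => csum {i : nat | i < n j} (f j))
      = csum (forall j : nat, {i : nat | i < n j}) (fun c => Val (fun j => f j (c j)));
  Val_one_head : forall s : nat -> car, fin_valued s ->
      Val (fun i => match i with 0 => one | S i' => s i' end) = Val s;
  Val_head_ones : forall k, Val (fun i => match i with 0 => k | S _ => one end) = k;
  le_one : forall k, one = add one k;
  Val_lower : forall (s : nat -> car) (k : car), fin_valued s ->
      (forall i, s i = add (s i) k) -> Val s = add (Val s) k
}.

Set Implicit Arguments.

Definition kle (K : TGPMonoid) (x y : K) : Prop := y = add K y x.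

Section LTL.
Variables (K : TGPMonoid) (AP : Type).

Definition word := nat -> (AP -> bool).

Definition suffix (w : word) (i : nat) : word := fun n => w (i + n).

Definition prefix_concat (w : word) (i : nat) (u : word) : word :=
  fun j => if j <? i then w j else u (j - i).

Inductive formula : Type :=
| FConst : car K -> formula
| FAtom : AP -> formula
| FNAtom : AP -> formula
| FOr : formula -> formula -> formula
| FAnd : formula -> formula -> formula
| FNext : formula -> formula
| FUntil : formula -> formula -> formula
| FBox : formula -> formula.

Fixpoint sem (phi : formula) (w : word) {struct phi} : car K :=
  match phi with
  | FConst k => k
  | FAtom a => if w 0 a then one K else zero K
  | FNAtom a => if w 0 a then zero K else one K
  | FOr p q => add K (sem p w) (sem q w)
  | FAnd p q => mul K (sem p w) (sem q w)
  | FNext p => sem p (suffix w 1)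
  | FUntil p q =>
      csum K nat (fun i => Val K (fun j =>
        if j <? i then sem p (suffix w j)
        else if j =? i then sem q (suffix w i) else one K))
  | FBox p => Val K (fun i => sem p (suffix w i))
  end.

Definition FTrue : formula := FConst (one K).
Definition FWUntil (p q : formula) : formula := FOr (FBox p) (FUntil p q).

Inductive sbLTL : formula -> Prop :=
| sb_true : sbLTL FTrue
| sb_atom : forall a, sbLTL (FAtom a)
| sb_natom : forall a, sbLTL (FNAtom a)
| sb_or : forall p q, sbLTL p -> sbLTL q -> sbLTL (FOr p q)
| sb_and : forall p q, sbLTL p -> sbLTL q -> sbLTL (FAnd p q)
| sb_next : forall p, sbLTL p -> sbLTL (FNext p)
| sb_wuntil : forall p q, sbLTL p -> sbLTL q -> sbLTL (FWUntil p q)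
| sb_box : forall p, sbLTL p -> sbLTL (FBox p).

Variable k : car K.

Definition Lk (k' : car K) : Prop := @kle K k k'.

Inductive stLTL : formula -> Prop :=
| st_base : forall ki p, Lk ki -> ki <> zero K -> ki <> one K -> sbLTL p ->
    stLTL (FAnd (FConst ki) p)
| st_or : forall p q, stLTL p -> stLTL q -> stLTL (FOr p q).

Inductive RULTL : formula -> Prop :=
| r_const : forall k', Lk k' -> RULTL (FConst k')
| r_sb : forall p, sbLTL p -> RULTL p
| r_st : forall p, stLTL p -> RULTL p
| r_next : forall p, RULTL p -> RULTL (FNext p)
| r_or : forall p q, stLTL p -> stLTL q -> RULTL (FOr p q)
| r_and_st_l : forall p q, sbLTL p -> stLTL q -> RULTL (FAnd p q)
| r_and_st_r : forall p q, sbLTL p -> stLTL q -> RULTL (FAnd q p)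
| r_and_wu_l : forall p x l, sbLTL p -> stLTL x -> stLTL l -> RULTL (FAnd p (FWUntil x l))
| r_and_wu_r : forall p x l, sbLTL p -> stLTL x -> stLTL l -> RULTL (FAnd (FWUntil x l) p)
| r_and_box_l : forall p x, sbLTL p -> stLTL x -> RULTL (FAnd p (FBox x))
| r_and_box_r : forall p x, sbLTL p -> stLTL x -> RULTL (FAnd (FBox x) p)
| r_wuntil : forall p q, stLTL p -> stLTL q -> RULTL (FWUntil p q)
| r_box : forall p, stLTL p -> RULTL (FBox p).

Definition k_safe (s : word -> car K) : Prop :=
  forall w : word,
    (forall i, 0 < i -> exists u : word, @kle K k (s (prefix_concat w i u))) ->
    @kle K k (s w).

End LTL.

From Stdlib Require Import List Arith Lia Classical FunctionalExtensionality ProofIrrelevance.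

(* Every formula of the class takes its values in {0} ∪ L_k, and on such values the
   threshold "≥ k" commutes with the connectives: since the natural order is total,
   k ≤ x + y iff k ≤ x or k ≤ y, and k ≤ Σ_i x_i iff k ≤ x_i for some i; on finitely-valued
   sequences Val^ω vanishes as soon as an entry is 0 and stays in L_k otherwise, so
   k ≤ Val^ω(x) iff k ≤ x_i for all i.  Hence {w | k ≤ ‖φ‖(w)} is obtained from sets
   depending only on w(0) by finite unions, intersections, countable intersections and
   shifts, all of which preserve safety; for the weak until this uses
   k ≤ ‖ξ Ũ λ‖(w) iff for every j, k ≤ ‖ξ‖(w_≥j) or k ≤ ‖λ‖(w_≥i) for some i ≤ j. *)

Section NaturalOrder.
Context {K : TGPMonoid}.
Implicit Types x y z : car K.

Lemma kle_trans x y z : kle K x y -> kle K y z -> kle K x z.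
Proof.
  unfold kle; intros Hxy Hyz.
  rewrite Hyz; now rewrite <- add_assoc, <- Hxy.
Qed.

Lemma kle_addl x y : kle K x (add K x y).
Proof. unfold kle; now rewrite (add_comm K (add K x y) x), add_assoc, add_idem. Qed.

Lemma kle_addr x y : kle K y (add K x y).
Proof. rewrite add_comm; apply kle_addl. Qed.

Lemma kle_antisym x y : kle K x y -> kle K y x -> x = y.
Proof. unfold kle; intros Hxy Hyx. now rewrite Hyx, add_comm. Qed.

Lemma add_cases x y : add K x y = x \/ add K x y = y.
Proof.
  destruct (nat_order_total K x y) as [Hy | Hx].
  - right; now rewrite add_comm.
  - left; now symmetry.
Qed.

Lemma kle_add_split z x y : kle K z (add K x y) -> kle K z x \/ kle K z y.
Proof. destruct (add_cases x y) as [-> | ->]; auto. Qed.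

Lemma csum_zero {I : Type} (f : I -> car K) :
  (forall i, f i = zero K) -> csum K I f = zero K.
Proof.
  intro Hf.
  replace f with (fun _ : I => mul K (zero K) (one K))
    by (extensionality i; now rewrite Hf, mul_0l).
  now rewrite csum_mul_one, mul_0l.
Qed.

(* Split [I] into the singleton [{i0}] and its complement, and use [csum_partition]. *)
Lemma kle_csum {I : Type} (eq_dec : forall i j : I, {i = j} + {i <> j})
    (f : I -> car K) (i0 : I) :
  kle K (f i0) (csum K I f).
Proof.
  pose (part := fun b : bool => {i : I | if b then i = i0 else i <> i0}).
  pose (e := fun p : {b : bool & part b} => proj1_sig (projT2 p)).
  pose (e' := fun i : I =>
    match eq_dec i i0 with
    | left h => existT part true (exist _ i h)
    | right h => existT part false (exist _ i h)
    end).
  assert (He'e : forall p, e' (e p) = p).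
  { intros [[|] [i h]]; unfold e, e'; simpl; destruct (eq_dec i i0) as [h' | h'];
      try contradiction; do 2 f_equal; apply proof_irrelevance. }
  assert (Hee' : forall i, e (e' i) = i).
  { intro i; unfold e, e'; now destruct (eq_dec i i0). }
  rewrite <- (csum_bij K _ _ e e' He'e Hee' f).
  rewrite (csum_partition K bool part (fun p => f (e p))), csum_pair.
  rewrite (csum_single K _ _ (exist _ i0 eq_refl : part true)).
  - apply kle_addl.
  - intros [i h]; simpl in h; subst i; f_equal; apply proof_irrelevance.
Qed.

End NaturalOrder.

Section ValueClasses.
Context {K : TGPMonoid} (k : car K).
Hypothesis hk0 : k <> zero K.
Implicit Types (x y v : car K) (s f : nat -> car K).

Definition zero_or_Lk v := v = zero K \/ kle K k v.
Definition boolean v := v = zero K \/ v = one K.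

Lemma not_kle_zero : ~ kle K k (zero K).
Proof. unfold kle; rewrite add_0l; intro Hk; now apply hk0. Qed.

Lemma zero_or_Lk_not_kle v : zero_or_Lk v -> ~ kle K k v -> v = zero K.
Proof. now intros [Hv | Hv]. Qed.

Lemma boolean_zero_or_Lk v : boolean v -> zero_or_Lk v.
Proof. intros [-> | ->]; [now left | right; apply le_one]. Qed.

Lemma boolean_fin_valued s : (forall j, boolean (s j)) -> fin_valued s.
Proof.
  intro Hs; exists (zero K :: one K :: nil); intro j.
  destruct (Hs j) as [-> | ->]; simpl; auto.
Qed.

Lemma add_Lk_iff x y : kle K k (add K x y) <-> kle K k x \/ kle K k y.
Proof.
  split; [apply kle_add_split|].
  intros [Hx | Hy]; eapply kle_trans; eauto using kle_addl, kle_addr.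
Qed.

Lemma add_zero_or_Lk x y : zero_or_Lk x -> zero_or_Lk y -> zero_or_Lk (add K x y).
Proof.
  intros [-> | Hx] Hy; [now rewrite add_0l|].
  right; eapply kle_trans; [exact Hx | apply kle_addl].
Qed.

Lemma add_boolean x y : boolean x -> boolean y -> boolean (add K x y).
Proof.
  intros [-> | ->] Hy; [now rewrite add_0l|].
  right; apply kle_antisym; [apply le_one | apply kle_addl].
Qed.

Lemma mul_boolean x y : boolean x -> boolean y -> boolean (mul K x y).
Proof. intros [-> | ->] Hy; [left; apply mul_0l | now rewrite mul_1l]. Qed.

Lemma Val_Lk_iff s : fin_valued s -> (forall j, zero_or_Lk (s j)) ->
  kle K k (Val K s) <-> forall j, kle K k (s j).
Proof.
  intros Hfin Hs; split; [|now apply Val_lower].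
  intros HV j; apply NNPP; intro Hj.
  apply not_kle_zero; rewrite <- (Val_zero K s Hfin); [exact HV|].
  exists j; now apply zero_or_Lk_not_kle.
Qed.

Lemma Val_zero_or_Lk s : fin_valued s -> (forall j, zero_or_Lk (s j)) ->
  zero_or_Lk (Val K s).
Proof.
  intros Hfin Hs; destruct (classic (forall j, kle K k (s j))) as [Hall | Hex].
  - right; now apply Val_lower.
  - left; apply Val_zero; [exact Hfin|].
    apply not_all_ex_not in Hex as [j Hj]; exists j; now apply zero_or_Lk_not_kle.
Qed.

Lemma Val_boolean s : (forall j, boolean (s j)) -> boolean (Val K s).
Proof.
  intro Hs; destruct (classic (exists j, s j = zero K)) as [Hex | Hno].
  - left; apply Val_zero; [now apply boolean_fin_valued | exact Hex].
  - right; replace s with (fun _ : nat => one K) by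
      (extensionality j; destruct (Hs j); [exfalso; eauto | auto]).
    apply Val_ones.
Qed.

Lemma csum_Lk_iff f : (forall i, zero_or_Lk (f i)) ->
  kle K k (csum K nat f) <-> exists i, kle K k (f i).
Proof.
  intro Hf; split.
  - intro Hsum; apply NNPP; intro Hno; apply not_kle_zero.
    rewrite <- (csum_zero f); [exact Hsum|].
    intro i; apply zero_or_Lk_not_kle; eauto.
  - intros [i Hi]; eapply kle_trans; [exact Hi | apply (kle_csum Nat.eq_dec)].
Qed.

Lemma csum_zero_or_Lk f : (forall i, zero_or_Lk (f i)) -> zero_or_Lk (csum K nat f).
Proof.
  intro Hf; destruct (classic (exists i, kle K k (f i))) as [Hex | Hno].
  - right; now apply csum_Lk_iff.
  - left; apply csum_zero; intro i; apply zero_or_Lk_not_kle; eauto.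
Qed.

Lemma csum_boolean f : (forall i, boolean (f i)) -> boolean (csum K nat f).
Proof.
  intro Hf; destruct (classic (exists i, f i = one K)) as [[i Hi] | Hno].
  - right; apply kle_antisym; [apply le_one|].
    rewrite <- Hi; apply (kle_csum Nat.eq_dec).
  - left; apply csum_zero; intro i; destruct (Hf i); [auto | exfalso; eauto].
Qed.

End ValueClasses.

Section SafetyProperties.
Context {AP : Type}.
Implicit Types (w u : word AP) (P Q : word AP -> Prop).

Lemma suffix_prefix_concat w u n j :
  suffix (prefix_concat w (n + j) u) j = prefix_concat (suffix w j) n u.
Proof.
  unfold suffix, prefix_concat; extensionality m.
  destruct (Nat.ltb_spec (j + m) (n + j)), (Nat.ltb_spec m n);
    try lia; [reflexivity | f_equal; lia].
Qed.

Lemma prefix_concat_le w u {m m'} : m <= m' ->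
  prefix_concat w m' u = prefix_concat w m (suffix (prefix_concat w m' u) m).
Proof.
  intro Hm; unfold prefix_concat, suffix; extensionality x.
  destruct (Nat.ltb_spec x m).
  - destruct (Nat.ltb_spec x m'); [reflexivity | lia].
  - now replace (m + (x - m)) with x by lia.
Qed.

Definition safety_property P :=
  forall w, (forall i, 0 < i -> exists u, P (prefix_concat w i u)) -> P w.

Lemma safety_property_ext P Q :
  (forall w, P w <-> Q w) -> safety_property P -> safety_property Q.
Proof.
  intros HPQ HP w Hw; apply HPQ, HP; intros i Hi.
  destruct (Hw i Hi) as [u Hu]; exists u; now apply HPQ.
Qed.

Lemma safety_bad_prefix {P} w : safety_property P -> ~ P w ->
  exists m, 0 < m /\ forall u', ~ P (prefix_concat w m u').
Proof.
  intros HP Hw; apply NNPP; intro Hno; apply Hw, HP; intros i Hi.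
  apply NNPP; intro Hbad; apply Hno; exists i; split; [exact Hi|].
  intros u Hu; apply Hbad; now exists u.
Qed.

Lemma bad_prefix_extend {P w m m'} : m <= m' ->
  (forall u, ~ P (prefix_concat w m u)) -> forall u, ~ P (prefix_concat w m' u).
Proof. intros Hm Hbad u; rewrite (prefix_concat_le w u Hm); apply Hbad. Qed.

(* Two bad prefixes of [w] combine into the longer one, which is bad for both. *)
Lemma safety_or P Q : safety_property P -> safety_property Q ->
  safety_property (fun w => P w \/ Q w).
Proof.
  intros HP HQ w Hw; apply NNPP; intros HPQ%not_or_and; destruct HPQ as [Hp Hq].
  destruct (safety_bad_prefix w HP Hp) as [m1 [Hm1 Hbad1]].
  destruct (safety_bad_prefix w HQ Hq) as [m2 [Hm2 Hbad2]].
  destruct (Hw (Nat.max m1 m2)) as [u [Hu | Hu]]; [lia | |].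
  - exact (bad_prefix_extend (Nat.le_max_l m1 m2) Hbad1 _ Hu).
  - exact (bad_prefix_extend (Nat.le_max_r m1 m2) Hbad2 _ Hu).
Qed.

Lemma safety_forall {I : Type} {P : I -> word AP -> Prop} :
  (forall i, safety_property (P i)) -> safety_property (fun w => forall i, P i w).
Proof.
  intros HP w Hw i; apply HP; intros n Hn.
  destruct (Hw n Hn) as [u Hu]; now exists u.
Qed.

Lemma safety_and P Q : safety_property P -> safety_property Q ->
  safety_property (fun w => P w /\ Q w).
Proof.
  intros HP HQ.
  apply safety_property_ext with (P := fun w => forall b : bool, if b then P w else Q w).
  - intro w; split; [intro H; exact (conj (H true) (H false)) | now intros [] []].
  - apply safety_forall; intros []; assumption.
Qed.

Lemma safety_suffix {P} j : safety_property P -> safety_property (fun w => P (suffix w j)).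
Proof.
  intros HP w Hw; apply HP; intros n Hn.
  destruct (Hw (n + j)) as [u Hu]; [lia|].
  exists u; now rewrite <- suffix_prefix_concat.
Qed.

Lemma safety_const (c : Prop) : safety_property (fun _ => c).
Proof. intros w Hw; destruct (Hw 1) as [u Hu]; [lia | exact Hu]. Qed.

Lemma safety_head P : (forall w w', w 0 = w' 0 -> P w -> P w') -> safety_property P.
Proof.
  intros HP w Hw; destruct (Hw 1) as [u Hu]; [lia|].
  apply (HP (prefix_concat w 1 u)); [reflexivity | exact Hu].
Qed.

Lemma safety_bounded_exists {P : nat -> word AP -> Prop} j :
  (forall i, safety_property (P i)) -> safety_property (fun w => exists i, i <= j /\ P i w).
Proof.
  intro HP; induction j as [|j IH].
  - apply safety_property_ext with (P := P 0); [|apply HP].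
    intro w; split; [now exists 0|].
    intros [i [Hi Hw]]; now replace i with 0 in Hw by lia.
  - apply safety_property_ext with (P := fun w => (exists i, i <= j /\ P i w) \/ P (S j) w).
    + intro w; split.
      * intros [[i [Hi Hw]] | Hw]; [exists i | exists (S j)]; split; auto.
      * intros [i [Hi Hw]]; destruct (Nat.eq_dec i (S j)) as [-> | Hne]; [now right|].
        left; exists i; split; [lia | exact Hw].
    + now apply safety_or.
Qed.

End SafetyProperties.

Lemma weak_until_unfold (P Q : nat -> Prop) :
  (forall j, P j) \/ (exists i, (forall j, j < i -> P j) /\ Q i) <->
  forall j, P j \/ exists i, i <= j /\ Q i.
Proof.
  split.
  - intros [HP | [i [HP HQ]]] j; [now left|].
    destruct (Nat.ltb_spec j i); [left; auto | right; eauto].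
  - intro H; destruct (classic (forall j, P j)) as [Hall | Hex]; [now left | right].
    apply not_all_ex_not in Hex as [j0 Hj0].
    assert (Hfirst : forall n, (forall j, j < n -> P j) \/
                               exists i, i < n /\ (forall j, j < i -> P j) /\ Q i).
    { induction n as [|n [HP | [i [Hi HiQ]]]]; [left; lia | |].
      - destruct (H n) as [Hn | [i [Hi HQ]]].
        + left; intros j Hj; destruct (Nat.eq_dec j n) as [-> | Hne]; [exact Hn|].
          apply HP; lia.
        + right; exists i; repeat split; [lia | intros j Hj; apply HP; lia | exact HQ].
      - right; exists i; split; [lia | exact HiQ]. }
    destruct (Hfirst (S j0)) as [HP | [i [_ HiQ]]]; [|now exists i].
    exfalso; apply Hj0, HP; lia.
Qed.

Section SafeFormulas.
Context {K : TGPMonoid} {AP : Type} (k : car K).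
Hypothesis hk0 : k <> zero K.
Implicit Types (p q r : formula K AP) (w : word AP).

Definition safe_formula p :=
  (forall w, zero_or_Lk k (sem p w)) /\ safety_property (fun w => kle K k (sem p w)).
Definition boolean_formula p := forall w, boolean (sem p w).
Definition finite_valued_formula p := exists l, forall w, In (sem p w) l.

Lemma boolean_finite_valued p : boolean_formula p -> finite_valued_formula p.
Proof.
  intro Hp; exists (zero K :: one K :: nil); intro w.
  destruct (Hp w) as [-> | ->]; simpl; auto.
Qed.

Lemma finite_valued_suffixes p w :
  finite_valued_formula p -> fin_valued (fun i => sem p (suffix w i)).
Proof. intros [l Hl]; exists l; intro i; apply Hl. Qed.

Lemma safe_const c : zero_or_Lk k c -> safe_formula (FConst K AP c).
Proof. intro Hc; split; [intro w; exact Hc | exact (@safety_const AP (kle K k c))]. Qed.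

Lemma safe_head_dependent p : boolean_formula p ->
  (forall w w', w 0 = w' 0 -> sem p w = sem p w') -> safe_formula p.
Proof.
  intros Hb Hhead; split.
  - intro w; apply boolean_zero_or_Lk, Hb.
  - apply safety_head; intros w w' Hw; now rewrite (Hhead w w' Hw).
Qed.

Lemma safe_or p q : safe_formula p -> safe_formula q -> safe_formula (FOr p q).
Proof.
  intros [Zp Sp] [Zq Sq]; split.
  - intro w; now apply add_zero_or_Lk.
  - apply safety_property_ext with (P := fun w => kle K k (sem p w) \/ kle K k (sem q w)).
    + intro w; symmetry; apply add_Lk_iff.
    + now apply safety_or.
Qed.

(* [mul] need not be commutative: this form covers a boolean guard [p] on either side of [q]. *)
Lemma safe_guarded r {p q} : boolean_formula p -> safe_formula p -> safe_formula q ->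
  (forall w, (sem p w = zero K /\ sem r w = zero K) \/ (sem p w = one K /\ sem r w = sem q w)) ->
  safe_formula r.
Proof.
  intros Hb [_ Sp] [Zq Sq] Hr; split.
  - intro w; destruct (Hr w) as [[_ ->] | [_ ->]]; [now left | apply Zq].
  - apply safety_property_ext with (P := fun w => kle K k (sem p w) /\ kle K k (sem q w));
      [|now apply safety_and].
    intro w; destruct (Hr w) as [[-> ->] | [-> ->]].
    + split; [intros [Hk _] | intro Hk]; exfalso; now apply (not_kle_zero k hk0).
    + split; [now intros [_ Hq] | intro Hq; split; [apply le_one | exact Hq]].
Qed.

Lemma safe_and_l p q : boolean_formula p -> safe_formula p -> safe_formula q ->
  safe_formula (FAnd p q).
Proof.
  intros Hb Sp Sq; apply (safe_guarded _ Hb Sp Sq); intro w; simpl.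
  destruct (Hb w) as [-> | ->]; [left; split; [|apply mul_0l] | right; split; [|apply mul_1l]];
    reflexivity.
Qed.

Lemma safe_and_r p q : boolean_formula p -> safe_formula p -> safe_formula q ->
  safe_formula (FAnd q p).
Proof.
  intros Hb Sp Sq; apply (safe_guarded _ Hb Sp Sq); intro w; simpl.
  destruct (Hb w) as [-> | ->]; [left; split; [|apply mul_0r] | right; split; [|apply mul_1r]];
    reflexivity.
Qed.

Lemma safe_next p : safe_formula p -> safe_formula (FNext p).
Proof. intros [Zp Sp]; split; [intro w; apply Zp | exact (safety_suffix 1 Sp)]. Qed.

Lemma box_Lk_iff p w : finite_valued_formula p -> safe_formula p ->
  kle K k (sem (FBox p) w) <-> forall j, kle K k (sem p (suffix w j)).
Proof. intros Fp [Zp _]; apply (Val_Lk_iff k hk0); [now apply finite_valued_suffixes | auto]. Qed.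

Lemma safe_box p : finite_valued_formula p -> safe_formula p -> safe_formula (FBox p).
Proof.
  intros Fp Sp; split.
  - intro w; apply Val_zero_or_Lk; [now apply finite_valued_suffixes | intro; apply Sp].
  - apply safety_property_ext with (P := fun w => forall j, kle K k (sem p (suffix w j))).
    + intro w; symmetry; now apply box_Lk_iff.
    + apply (safety_forall (P := fun j w => kle K k (sem p (suffix w j)))).
      intro j; exact (safety_suffix j (proj2 Sp)).
Qed.

Definition until_seq p q w i : nat -> car K := fun j =>
  if j <? i then sem p (suffix w j) else if j =? i then sem q (suffix w i) else one K.

Section Until.
Variables (p q : formula K AP).
Hypotheses (Fp : finite_valued_formula p) (Sp : safe_formula p)
           (Fq : finite_valued_formula q) (Sq : safe_formula q).

Lemma until_seq_fin_valued w i : fin_valued (until_seq p q w i).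
Proof.
  destruct Fp as [lp Hlp], Fq as [lq Hlq].
  exists (lp ++ lq ++ one K :: nil); intro j; unfold until_seq.
  destruct (j <? i); [|destruct (j =? i)]; rewrite !in_app_iff; simpl; auto.
Qed.

Lemma until_seq_zero_or_Lk w i j : zero_or_Lk k (until_seq p q w i j).
Proof.
  unfold until_seq; destruct (j <? i); [apply Sp|].
  destruct (j =? i); [apply Sq | right; apply le_one].
Qed.

Lemma until_term_Lk_iff w i :
  kle K k (Val K (until_seq p q w i)) <->
  (forall j, j < i -> kle K k (sem p (suffix w j))) /\ kle K k (sem q (suffix w i)).
Proof.
  rewrite (Val_Lk_iff k hk0); [|apply until_seq_fin_valued | apply until_seq_zero_or_Lk].
  unfold until_seq; split.
  - intro H; split.
    + intros j Hj; specialize (H j); now rewrite (proj2 (Nat.ltb_lt j i) Hj) in H.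
    + specialize (H i); now rewrite Nat.ltb_irrefl, Nat.eqb_refl in H.
  - intros [Hp Hq] j; destruct (Nat.ltb_spec j i); [now apply Hp|].
    destruct (Nat.eqb_spec j i) as [-> | _]; [exact Hq | apply le_one].
Qed.

Lemma until_Lk_iff w :
  kle K k (sem (FUntil p q) w) <->
  exists i, (forall j, j < i -> kle K k (sem p (suffix w j))) /\ kle K k (sem q (suffix w i)).
Proof.
  simpl; rewrite (csum_Lk_iff k hk0).
  - split; intros [i Hi]; exists i; now apply until_term_Lk_iff.
  - intro i; apply Val_zero_or_Lk; [apply until_seq_fin_valued | apply until_seq_zero_or_Lk].
Qed.

Lemma wuntil_Lk_iff w :
  kle K k (sem (FWUntil p q) w) <->
  forall j, kle K k (sem p (suffix w j)) \/ exists i, i <= j /\ kle K k (sem q (suffix w i)).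
Proof.
  rewrite <- weak_until_unfold, <- box_Lk_iff, <- until_Lk_iff by assumption.
  apply add_Lk_iff.
Qed.

Lemma safe_wuntil : safe_formula (FWUntil p q).
Proof.
  split.
  - intro w; apply add_zero_or_Lk; [now apply safe_box|].
    apply (csum_zero_or_Lk k hk0); intro i.
    apply Val_zero_or_Lk; [apply until_seq_fin_valued | apply until_seq_zero_or_Lk].
  - eapply safety_property_ext; [intro w; symmetry; apply wuntil_Lk_iff|].
    apply safety_forall; intro j; apply safety_or.
    + exact (safety_suffix j (proj2 Sp)).
    + apply (safety_bounded_exists (P := fun i w => kle K k (sem q (suffix w i)))).
      intro i; exact (safety_suffix i (proj2 Sq)).
Qed.

End Until.

Lemma boolean_box p : boolean_formula p -> boolean_formula (FBox p).
Proof. intros Hp w; apply Val_boolean; intro j; apply Hp. Qed.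

Lemma boolean_wuntil p q : boolean_formula p -> boolean_formula q ->
  boolean_formula (FWUntil p q).
Proof.
  intros Hp Hq w; apply add_boolean; [now apply boolean_box|].
  apply csum_boolean; intro i; apply Val_boolean; intro j; unfold until_seq.
  destruct (j <? i); [apply Hp | destruct (j =? i); [apply Hq | now right]].
Qed.

Lemma sbLTL_boolean_safe p : sbLTL p -> boolean_formula p /\ safe_formula p.
Proof.
  induction 1 as [| a | a | p q _ [Bp Sp] _ [Bq Sq] | p q _ [Bp Sp] _ [Bq Sq]
                 | p _ [Bp Sp] | p q _ [Bp Sp] _ [Bq Sq] | p _ [Bp Sp]].
  - split; [intro w; now right | apply safe_const, boolean_zero_or_Lk; now right].
  - enough (Bp : boolean_formula (FAtom K a)).
    { split; [exact Bp | apply (safe_head_dependent _ Bp)]; intros w w' Hw; simpl; now rewrite Hw. }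
    intro w; simpl; destruct (w 0 a); [now right | now left].
  - enough (Bp : boolean_formula (FNAtom K a)).
    { split; [exact Bp | apply (safe_head_dependent _ Bp)]; intros w w' Hw; simpl; now rewrite Hw. }
    intro w; simpl; destruct (w 0 a); [now left | now right].
  - split; [intro w; now apply add_boolean | now apply safe_or].
  - split; [intro w; now apply mul_boolean | now apply safe_and_l].
  - split; [intro w; apply Bp | now apply safe_next].
  - split; [now apply boolean_wuntil | apply safe_wuntil; auto using boolean_finite_valued].
  - split; [now apply boolean_box | apply safe_box; auto using boolean_finite_valued].
Qed.

Lemma stLTL_finite_valued_safe p : stLTL k p -> finite_valued_formula p /\ safe_formula p.
Proof.
  induction 1 as [c p Hc _ _ Hp | p q _ [[lp Hlp] Sp] _ [[lq Hlq] Sq]].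
  - destruct (sbLTL_boolean_safe p Hp) as [Bp Sp].
    assert (Hguard : forall w, (sem p w = zero K /\ sem (FAnd (FConst K AP c) p) w = zero K) \/
                               (sem p w = one K /\ sem (FAnd (FConst K AP c) p) w = c)).
    { intro w; simpl; destruct (Bp w) as [-> | ->];
        [left; split; [|apply mul_0r] | right; split; [|apply mul_1r]]; reflexivity. }
    split.
    + exists (zero K :: c :: nil); intro w.
      destruct (Hguard w) as [[_ ->] | [_ ->]]; simpl; auto.
    + apply (safe_guarded _ Bp Sp (safe_const c (or_intror Hc)) Hguard).
  - split; [|now apply safe_or].
    exists (flat_map (fun x => map (add K x) lq) lp); intro w; simpl.
    apply in_flat_map; exists (sem p w); split; [apply Hlp | apply in_map, Hlq].
Qed.

Lemma RULTL_safe p : RULTL k p -> safe_formula p.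
Proof.
  induction 1 as [c Hc | p Hp | p Hp | p _ Sp | p q Hp Hq | p q Hp Hq | p q Hp Hq
                 | p x l Hp Hx Hl | p x l Hp Hx Hl | p x Hp Hx | p x Hp Hx | p q Hp Hq | p Hp];
  repeat match goal with
  | H : sbLTL _ |- _ => apply sbLTL_boolean_safe in H as [? ?]
  | H : stLTL _ _ |- _ => apply stLTL_finite_valued_safe in H as [? ?]
  end.
  - apply safe_const; now right.
  - assumption.
  - assumption.
  - now apply safe_next.
  - now apply safe_or.
  - now apply safe_and_l.
  - now apply safe_and_r.
  - apply safe_and_l; auto using safe_wuntil.
  - apply safe_and_r; auto using safe_wuntil.
  - apply safe_and_l; auto using safe_box.
  - apply safe_and_r; auto using safe_box.
  - now apply safe_wuntil.
  - now apply safe_box.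
Qed.

End SafeFormulas.

Theorem corollary1 (K : TGPMonoid) (AP : Type)
    (AP_finite : exists l : list AP, forall a : AP, In a l)
    (k : car K) (hk0 : k <> zero K) (hk1 : k <> one K)
    (phi : formula K AP) (hphi : RULTL k phi) :
  @k_safe K AP k (sem phi).
Proof. exact (proj2 (RULTL_safe k hk0 phi hphi)). Qed.
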